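(* Let $M=([n],\mathscr C)$ be a matroid and $C\in\mathscr C$ a circuit. The following are equivalent: (1) $C\in B_M$; (2) $\mathscr C\setminus\{C\}$ is not a tropical basis; (3) there is $x\in{\bf TP}^{n-1}$ such that $x\notin V(C)$ and $x\in V(C')$ for every circuit $C'\in\mathscr C\setminus\{C\}$.
   Context: Let ${\bf TP}^{n-1}$ be the tropical projective space over $(\mathbb R\cup\{-\infty\},\max,+)$. For a circuit $C$, $V(C)$ is the set of $x\in{\bf TP}^{n-1}$ such that $\max\{x_i:i\in C\}$ is attained at least twice. For $B\subseteq\mathscr C$, set $V(B)=\bigcap_{C\in B}V(C)$. A subset $B\subseteq\mathscr C$ is a tropical basis if $V(B)=V(\mathscr C)$. $B_M$ denotes the intersection of all tropical bases of $M$. *)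

From HB Require Import structures.
From mathcomp Require Import all_boot all_order all_algebra.
From mathcomp Require Import reals.
Set Implicit Arguments. Unset Strict Implicit. Unset Printing Implicit Defensive.
Import Order.TTheory GRing.Theory Num.Theory.
Local Open Scope ring_scope.

Record matroid (n : nat) := Matroid {
  circuits : {set {set 'I_n}};
  circ_nonempty : set0 \notin circuits;
  circ_incomparable : forall C1 C2, C1 \in circuits -> C2 \in circuits ->
                        C1 \subset C2 -> C1 = C2;
  circ_elim : forall C1 C2 e, C1 \in circuits -> C2 \in circuits -> C1 != C2 ->
                e \in C1 :&: C2 ->
                exists2 C3, C3 \in circuits & C3 \subset (C1 :|: C2) :\ e
}.

(* The tropical semiring R \cup {-oo}: None represents -oo. *)
Definition tle (R : realType) (a b : option R) : bool :=
  match a, b with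
  | None, _ => true
  | Some _, None => false
  | Some x, Some y => (x <= y)%R
  end.

(* A point of TP^{n-1} is represented by a vector in (R \cup {-oo})^n with
   at least one finite coordinate (all notions below are invariant under
   tropical scaling, i.e. adding a common real constant). *)
Definition inTP (R : realType) (n : nat) (x : 'I_n -> option R) : Prop :=
  exists i, x i != None.

Definition inV (R : realType) (n : nat) (C : {set 'I_n}) (x : 'I_n -> option R)
  : Prop :=
  exists i j, [/\ i \in C, j \in C, i != j, x i = x j &
                  forall k, k \in C -> tle (x k) (x i)].

Definition inVset (R : realType) (n : nat) (B : {set {set 'I_n}})
  (x : 'I_n -> option R) : Prop :=
  inTP x /\ forall C, C \in B -> inV C x.

Definition tropical_basis (R : realType) (n : nat) (M : matroid n)
  (B : {set {set 'I_n}}) : Prop :=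
  B \subset circuits M /\
  forall x : 'I_n -> option R, inVset B x <-> inVset (circuits M) x.

Definition in_BM (R : realType) (n : nat) (M : matroid n) (C : {set 'I_n})
  : Prop :=
  forall B, tropical_basis R M B -> C \in B.

From HB Require Import structures.
From mathcomp Require Import all_boot all_order all_algebra.
From mathcomp Require Import reals.
From Stdlib Require Import Classical.

Set Implicit Arguments.
Unset Strict Implicit.
Unset Printing Implicit Defensive.

(* A tropical basis avoiding C is contained in 𝒞 \ {C}, and V(B) only grows
   as B shrinks; so C lies in every tropical basis iff 𝒞 \ {C} is not one.
   As V(𝒞) = V(𝒞 \ {C}) ∩ V(C), this fails exactly when some point of
   V(𝒞 \ {C}) lies off V(C). *)

Section TropicalBasis.

Variables (R : realType) (n : nat) (M : matroid n).

Lemma inVset_subset (B1 B2 : {set {set 'I_n}}) (x : 'I_n -> option R) :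
  B1 \subset B2 -> inVset B2 x -> inVset B1 x.
Proof. by move=> sB12 [xTP xV]; split=> // C' /(subsetP sB12); apply: xV. Qed.

Lemma tropical_basisP (B : {set {set 'I_n}}) :
  B \subset circuits M ->
  tropical_basis R M B <->
  (forall x : 'I_n -> option R, inVset B x -> inVset (circuits M) x).
Proof.
move=> sBM; split=> [[_ VB] x /VB //|VB]; split=> // x.
by split=> [/VB|/(inVset_subset sBM)].
Qed.

Lemma tropical_basis_setD1P (C : {set 'I_n}) :
  C \in circuits M ->
  tropical_basis R M (circuits M :\ C) <->
  (forall x : 'I_n -> option R, inVset (circuits M :\ C) x -> inV C x).
Proof.
move=> CM; rewrite tropical_basisP ?subsetDl //.
split=> VB x xV; first by case: (VB x xV) => _; apply.
split; first by case: xV.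
move=> C' C'M; have [->|C'C] := eqVneq C' C; first exact: VB.
by case: xV => _; apply; rewrite in_setD1 C'C.
Qed.

End TropicalBasis.

Theorem lemma1 (R : realType) (n : nat) (M : matroid n) (C : {set 'I_n}) :
  C \in circuits M ->
  [<-> in_BM R M C;
       ~ tropical_basis R M (circuits M :\ C);
       exists x : 'I_n -> option R,
         [/\ inTP x, ~ inV C x &
             forall C', C' \in circuits M :\ C -> inV C' x]].
Proof.
move=> CM; split; [|split].
- by move=> inBM /inBM; rewrite setD11.
- rewrite tropical_basis_setD1P // => notVB; apply: NNPP => noWitness.
  apply: notVB => x [xTP xV]; apply: NNPP => xnotVC.
  by apply: noWitness; exists x.
- case=> x [xTP xnotVC xV] B [sBM VB]; apply: NNPP => /negP CB.
  have /VB[_ allV] : inVset B x.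
    by apply: inVset_subset (conj xTP xV); apply/subsetD1P.
  exact/xnotVC/allV.
Qed.
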